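(* Let $\mathbb{K}\subseteq\mathcal{K}\subseteq\mathcal{A}$ be field extensions such that $\mathcal{K}\subseteq\mathcal{A}$ is finite, separable and normal with Galois group $G$. Assume $G=NH$, where $H$ and $N$ are subgroups with $N\cap H=\{1\}$ and $N$ is generated by an element $\sigma$ central in $G$. Set $\mathcal{B}=\mathcal{A}^H$. Then $\mathcal{B}[X,\sigma,0]\subseteq\mathcal{A}[X,\sigma,0]$ is a centrally $(\mathbb{K}H)^*$-Galois extension.
   Context: $(\mathbb{K}H)^*$ is the dual Hopf algebra of the group algebra $\mathbb{K}H$, with $\{p_x\}_{x\in H}$ the dual basis; $\mathcal{A}$ is a $(\mathbb{K}H)^*$-comodule algebra via $\rho(a)=\sum_{x\in H}x(a)\otimes p_x$, with coinvariants $\mathcal{A}^H=\mathcal{B}$. The Ore extension $\mathcal{A}[X,\sigma,0]$ is the free left $\mathcal{A}$-module on $1,X,X^2,\dots$ with $X^nX^m=X^{n+m}$ and $Xa=\sigma(a)X$; $\mathcal{B}[X,\sigma,0]$ is its subalgebra (as $\sigma$ commutes with $H$). It is a comodule algebra via $\rho(aX^n)=\sum_x x(a)X^n\otimes p_x$, with coinvariants $\mathcal{B}[X,\sigma,0]$. For a comodule algebra $\mathcal{C}$ over a commutative Hopf algebra $\mathcal{H}$, an extension of coinvariants $\mathcal{C}'\subseteq\mathcal{C}$ is $\mathcal{H}$-Galois if $\mathcal{C}\otimes_{\mathcal{C}'}\mathcal{C}\to\mathcal{C}\otimes\mathcal{H}$, $c\otimes x\mapsto\sum cx_{\langle0\rangle}\otimes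 x_{\langle1\rangle}$, is bijective; $\mathcal{C}'\subseteq\mathcal{C}$ is centrally $\mathcal{H}$-Galois if the center $Z(\mathcal{C})$ is a subcomodule and $Z(\mathcal{C})^{\mathrm{co}\mathcal{H}}\subseteq Z(\mathcal{C})$ is $\mathcal{H}$-Galois with $Z(\mathcal{C})$ faithfully flat over $Z(\mathcal{C})^{\mathrm{co}\mathcal{H}}$. *)

From HB Require Import structures.
From mathcomp Require Import all_boot all_order all_algebra all_fingroup all_solvable all_field.
Set Implicit Arguments. Unset Strict Implicit. Unset Printing Implicit Defensive.
Import GRing.Theory.
Local Open Scope ring_scope.

Section Generic.
Variables (T : zmodType) (one : T) (mul : T -> T -> T).

(* A (left) module over the subset S of T, carried by the subgroup [sm_dom]
   of the abelian group [sm_car], with action [sm_act] (only elements of S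
   are required to act as module scalars). *)
Record smod := SMod {
  sm_car : zmodType;
  sm_dom : sm_car -> Prop;
  sm_act : T -> sm_car -> sm_car }.
Arguments sm_dom : clear implicits.
Arguments sm_act : clear implicits.

Definition subgroupP (W : zmodType) (d : W -> Prop) :=
  [/\ d 0, forall x y, d x -> d y -> d (x + y) & forall x, d x -> d (- x)].

Definition additive_on (W V : zmodType) (d : W -> Prop) (g : W -> V) :=
  forall x y, d x -> d y -> g (x + y) = g x + g y.

Definition is_smod (S : T -> Prop) (M : smod) :=
  subgroupP (sm_dom M) /\
  [/\ forall s m, S s -> sm_dom M m -> sm_dom M (sm_act M s m),
      forall s, S s -> additive_on (sm_dom M) (sm_act M s),
      forall s t m, S s -> S t -> sm_dom M m ->
         sm_act M (s + t) m = sm_act M s m + sm_act M t m,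
      forall s t m, S s -> S t -> sm_dom M m ->
         sm_act M (mul s t) m = sm_act M s (sm_act M t m)
    & forall m, sm_dom M m -> sm_act M one m = m].

Definition balanced (S : T -> Prop) (P Q : smod) (V : zmodType)
    (f : sm_car P -> sm_car Q -> V) :=
  [/\ forall p, sm_dom P p -> additive_on (sm_dom Q) (f p),
      forall q, sm_dom Q q -> additive_on (sm_dom P) (f^~ q)
    & forall s p q, S s -> sm_dom P p -> sm_dom Q q ->
        f (sm_act P s p) q = f p (sm_act Q s q)].

Definition is_tensor (S : T -> Prop) (P Q : smod) (W : zmodType)
    (d : W -> Prop) (beta : sm_car P -> sm_car Q -> W) :=
  [/\ subgroupP d,
      forall p q, sm_dom P p -> sm_dom Q q -> d (beta p q),
      balanced S beta
    & forall (V : zmodType) (f : sm_car P -> sm_car Q -> V), balanced S f ->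
        (exists g : W -> V, additive_on d g /\
           forall p q, sm_dom P p -> sm_dom Q q -> g (beta p q) = f p q)
        /\ (forall g1 g2 : W -> V, additive_on d g1 -> additive_on d g2 ->
           (forall p q, sm_dom P p -> sm_dom Q q -> g1 (beta p q) = f p q) ->
           (forall p q, sm_dom P p -> sm_dom Q q -> g2 (beta p q) = f p q) ->
           forall w, d w -> g1 w = g2 w)].

Definition is_slinear (P Q : smod) (S : T -> Prop) (f : sm_car P -> sm_car Q) :=
  [/\ forall p, sm_dom P p -> sm_dom Q (f p),
      additive_on (sm_dom P) f
    & forall s p, S s -> sm_dom P p -> f (sm_act P s p) = sm_act Q s (f p)].

Definition flat (S : T -> Prop) (M : smod) :=
  forall (P Q : smod) (f : sm_car P -> sm_car Q),
    is_smod S P -> is_smod S Q -> is_slinear S f ->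
    (forall p p', sm_dom P p -> sm_dom P p' -> f p = f p' -> p = p') ->
  forall (W1 W2 : zmodType) (d1 : W1 -> Prop) (d2 : W2 -> Prop)
         (b1 : sm_car P -> sm_car M -> W1) (b2 : sm_car Q -> sm_car M -> W2),
    is_tensor S d1 b1 -> is_tensor S d2 b2 ->
  forall g : W1 -> W2, additive_on d1 g -> (forall w, d1 w -> d2 (g w)) ->
    (forall p m, sm_dom P p -> sm_dom M m -> g (b1 p m) = b2 (f p) m) ->
    forall w w', d1 w -> d1 w' -> g w = g w' -> w = w'.

Definition faithfully_flat (S : T -> Prop) (M : smod) :=
  flat S M /\
  forall (P : smod), is_smod S P ->
  forall (W : zmodType) (d : W -> Prop) (b : sm_car P -> sm_car M -> W),
    is_tensor S d b -> (forall w, d w -> w = 0) ->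
    forall p, sm_dom P p -> p = 0.

(* The (KH)^*-comodule structure rho(c) = sum_(h in H) coact h c (x) p_h is
   encoded by the components [coact h] (I = H, a finite type).
   C (x) (KH)^* is identified with functions H -> C via the basis (p_h). *)
Variables (I : finType) (coact : I -> T -> T).

Definition centerP (z : T) := forall x, mul z x = mul x z.

(* coinvariants: rho(c) = c (x) 1, with 1 = sum_h p_h *)
Definition coinvP (c : T) := forall h, coact h c = c.

Definition Zmod : smod := SMod centerP mul.

(* Galois map  Z (x)_{Z^co} Z -> Z (x) (KH)^*,  c (x) x |-> sum_h c (h.x) (x) p_h *)
Definition galois_map (c x : T) : {ffun I -> T} := [ffun h => mul c (coact h x)].

Definition Zco (z : T) := centerP z /\ coinvP z.

Definition centrally_galois (C' : T -> Prop) :=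
  [/\ forall c, C' c <-> coinvP c,
      forall z h, centerP z -> centerP (coact h z),
      @is_tensor Zco Zmod Zmod _
        (fun f : {ffun I -> T} => forall h, centerP (f h)) galois_map
    & faithfully_flat Zco Zmod].

End Generic.

(* The Ore extension A[X, s, 0], elements represented by their coefficient *)
(* sequence as polynomials: sum_i a_i X^i, with X a = s(a) X, hence         *)
(* (a X^i)(b X^j) = a s^i(b) X^(i+j).                                       *)
Section Ore.
Variables (F : fieldType) (L : splittingFieldType F).

Definition ore_mul (s : gal_of (fullv : {vspace L})) (p q : {poly L}) : {poly L} :=
  \sum_(i < size p) \sum_(j < size q)
     (p`_i * (s ^+ i)%g q`_j) *: 'X^(i + j).

Definition ore_coact (H : {group gal_of (fullv : {vspace L})})
    (h : {x : gal_of (fullv : {vspace L}) | x \in H}) (p : {poly L}) : {poly L} :=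
  map_poly (fun a => (val h) a) p.

Definition ore_over (B : {vspace L}) (p : {poly L}) : Prop :=
  forall i, p`_i \in B.
End Ore.

From Pilot Require Import Defs.
From HB Require Import structures.
From mathcomp Require Import all_boot all_order all_algebra all_fingroup all_solvable all_field.
From Stdlib Require Import ClassicalEpsilon.
Set Implicit Arguments. Unset Strict Implicit. Unset Printing Implicit Defensive.
Import GRing.Theory.
Local Open Scope ring_scope.

(* The centre of A[X, s, 0] consists of the polynomials with coefficients in
   the fixed field A^<s> supported in degrees divisible by the order of s, and
   H acts on it coefficientwise since H commutes with s.  As <s> meets H
   trivially, distinct elements of H remain distinct on A^<s>, so Dedekind's
   lemma gives e_1, ..., e_n in A^<s> with (h_i(e_k)) invertible.  The rows of
   the inverse matrix are H-invariant central coordinates: the centre is free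
   over its coinvariants with basis (e_k), hence faithfully flat, and both
   sides of the Galois map become n copies of the centre. *)

Section AdditiveOn.
Variables (W V : zmodType) (d : W -> Prop).
Hypothesis sgd : subgroupP d.

Lemma subgroup_sum n (x : 'I_n -> W) : (forall k, d (x k)) -> d (\sum_k x k).
Proof. by case: sgd => d0 dD _ dx; elim/big_ind: _. Qed.

Lemma additive_on0 (g : W -> V) : additive_on d g -> g 0 = 0.
Proof.
case: sgd => d0 _ _ gD; apply: (@addrI _ (g 0)).
by rewrite -gD // !addr0.
Qed.

Lemma additive_onN (g : W -> V) x : additive_on d g -> d x -> g (- x) = - g x.
Proof.
move=> gD dx; have [_ _ dN] := sgd; apply: (@addrI _ (g x)).
rewrite -gD //; last exact: dN.
by rewrite !subrr (additive_on0 gD).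
Qed.

Lemma additive_on_sum (g : W -> V) n (x : 'I_n -> W) :
  additive_on d g -> (forall k, d (x k)) -> g (\sum_k x k) = \sum_k g (x k).
Proof.
move=> gD; elim: n x => [|n IHn] x dx; first by rewrite !big_ord0 (additive_on0 gD).
rewrite !big_ord_recr /= gD ?IHn //; last exact: subgroup_sum.
Qed.

End AdditiveOn.

Section SubgroupType.
Variables (W : zmodType) (D : W -> Prop).
Hypothesis sgD : subgroupP D.

Definition mem_subgroup (w : W) : bool :=
  if excluded_middle_informative (D w) then true else false.

Lemma mem_subgroupP w : reflect (D w) (mem_subgroup w).
Proof. by rewrite /mem_subgroup; case: excluded_middle_informative; constructor. Qed.

Lemma mem_subgroup_zmod_closed : zmod_closed mem_subgroup.
Proof.
case: sgD => D0 DD DN; split=> [|x y /mem_subgroupP Dx /mem_subgroupP Dy].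
  exact/mem_subgroupP.
by apply/mem_subgroupP; apply: DD (DN _ Dy).
Qed.

HB.instance Definition _ :=
  GRing.isZmodClosed.Build W mem_subgroup mem_subgroup_zmod_closed.

(* The [let] makes the type depend on [sgD], on which its instances depend. *)
Definition subgroup_type := let _ := sgD in {w : W | mem_subgroup w}.
HB.instance Definition _ := [isSub of subgroup_type for (@sval W mem_subgroup)].
HB.instance Definition _ := [Choice of subgroup_type by <:].
HB.instance Definition _ := [SubChoice_isSubZmodule of subgroup_type by <:].

Definition to_subgroup (w : W) : subgroup_type := insubd 0 w.

Lemma to_subgroupK w : D w -> val (to_subgroup w) = w.
Proof. by move=> Dw; rewrite insubdK //; apply/mem_subgroupP. Qed.

Lemma to_subgroupD x y : D x -> D y -> to_subgroup (x + y) = to_subgroup x + to_subgroup y.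
Proof.
case: sgD => _ DD _ Dx Dy; apply: val_inj => /=.
by rewrite !to_subgroupK //; apply: DD.
Qed.

End SubgroupType.

Local Notation dom P := (@sm_dom _ P).
Local Notation act P := (@sm_act _ P).

(* Uniqueness in the universal property, applied to the inclusion of [D]. *)
Lemma tensor_ind (T : zmodType) (S : T -> Prop) (P Q : smod T) (W : zmodType)
    (d : W -> Prop) (b : sm_car P -> sm_car Q -> W) (D : W -> Prop) :
  is_tensor S d b -> subgroupP D ->
  (forall p q, dom P p -> dom Q q -> D (b p q)) -> forall w, d w -> D w.
Proof.
move=> [_ _ [b1 b2 b3] univ] sgD Db w dw.
pose f p q := to_subgroup sgD (b p q).
have balf : balanced S f.
  split=> [p Pp x y Qx Qy | q Qq x y Px Py | s p q Ss Pp Qq]; rewrite /f.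
  - by rewrite b1 // to_subgroupD //; apply: Db.
  - by rewrite b2 // to_subgroupD //; apply: Db.
  - by rewrite b3.
have [[g [gD gb]] _] := univ _ f balf.
have [_ uniq_b] := univ _ b (And3 b1 b2 b3).
suff <- : val (g w) = w by apply/mem_subgroupP; apply: valP.
apply: (uniq_b (fun w => val (g w)) id) => // [x y dx dy|p q Pp Qq].
  by rewrite gD // raddfD.
by rewrite gb // to_subgroupK //; apply: Db.
Qed.

Lemma smod_act0 (T : zmodType) (one : T) (mul : T -> T -> T) (S : T -> Prop)
    (P : smod T) p :
  S 0 -> is_smod one mul S P -> dom P p -> act P 0 p = 0.
Proof.
move=> S0 [_ [_ _ actDl _ _]] Pp; apply: (@addrI _ (act P 0 p)).
by rewrite -actDl // !addr0.
Qed.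

Section DualBasis.
Variables (T : zmodType) (one : T) (mul : T -> T -> T) (S : T -> Prop) (M : smod T).
Variables (m : nat) (e : 'I_m -> sm_car M) (c : 'I_m -> sm_car M -> T).
Hypotheses (sgM : subgroupP (dom M))
  (M_act : forall s x, S s -> dom M x -> dom M (act M s x))
  (e_dom : forall k, dom M (e k)) (c_S : forall k x, dom M x -> S (c k x))
  (c_decomp : forall x, dom M x -> x = \sum_k act M (c k x) (e k)).

Lemma is_tensor_dual_basis (P : smod T) (W : zmodType) (d : W -> Prop)
    (b : sm_car P -> sm_car M -> W) (a : 'I_m -> W -> sm_car P) :
  subgroupP d -> (forall p x, dom P p -> dom M x -> d (b p x)) -> balanced S b ->
  (forall k, additive_on d (a k)) -> (forall k w, d w -> dom P (a k w)) ->
  (forall k p x, dom P p -> dom M x -> a k (b p x) = act P (c k x) p) ->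
  (forall w, d w -> w = \sum_k b (a k w) (e k)) ->
  is_tensor S d b.
Proof.
move=> sgd bd bbal aD a_dom ab w_decomp; split=> // V f [f1 f2 f3]; split.
  exists (fun w => \sum_k f (a k w) (e k)); split=> [x y dx dy | p x Pp Mx].
    rewrite -big_split; apply: eq_bigr => k _; rewrite aD //.
    exact: f2 (e_dom k) _ _ (a_dom _ _ dx) (a_dom _ _ dy).
  transitivity (\sum_k f p (act M (c k x) (e k))).
    by apply: eq_bigr => k _; rewrite ab // (f3 _ _ _ (c_S k Mx) Pp (e_dom k)).
  rewrite [in RHS](c_decomp Mx) (additive_on_sum sgM (f1 p Pp)) // => k.
  exact/M_act/e_dom/c_S.
move=> g1 g2 g1D g2D g1b g2b w dw.
have dom_k k : dom P (a k w) /\ dom M (e k) by split; [exact: a_dom | exact: e_dom].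
have d_k k : d (b (a k w) (e k)) by have [Pa Me] := dom_k k; exact: bd.
rewrite (w_decomp w dw) (additive_on_sum sgd g1D d_k) (additive_on_sum sgd g2D d_k).
by apply: eq_bigr => k _; have [Pa Me] := dom_k k; rewrite g1b ?g2b.
Qed.

Hypotheses (S0 : S 0) (S_comm : forall s t, S s -> S t -> mul s t = mul t s)
  (c_additive : forall k, additive_on (dom M) (c k))
  (c_linear : forall k s x, S s -> dom M x -> c k (act M s x) = mul s (c k x))
  (c_e : forall k j, c k (e j) = if k == j then one else 0).

Lemma tensor_coord (P : smod T) (W : zmodType) (d : W -> Prop)
    (b : sm_car P -> sm_car M -> W) k :
  is_smod one mul S P -> is_tensor S d b ->
  exists phi : W -> sm_car P, additive_on d phi /\
    forall p x, dom P p -> dom M x -> phi (b p x) = act P (c k x) p.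
Proof.
move=> [_ [_ actD actDl actM _]] [_ _ _ univ].
have bal : balanced S (fun p x => act P (c k x) p).
  split=> [p Pp x y Mx My | x Mx p q Pp Pq | s p x Ss Pp Mx] /=.
  - by have Sx := c_S k Mx; have Sy := c_S k My; rewrite c_additive // actDl.
  - exact: actD (c_S k Mx) _ _ Pp Pq.
  - by have Sx := c_S k Mx; rewrite c_linear // S_comm // actM.
by have [[phi phiP] _] := univ _ _ bal; exists phi.
Qed.

Lemma tensor_decomp (P : smod T) (W : zmodType) (d : W -> Prop)
    (b : sm_car P -> sm_car M -> W) :
  is_smod one mul S P -> is_tensor S d b -> forall w, d w ->
  exists p : 'I_m -> sm_car P, (forall k, dom P (p k)) /\ w = \sum_k b (p k) (e k).
Proof.
move=> [sgP [P_act _ _ _ _]] tb; have [_ _ [b1 b2 b3] _] := tb.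
have [P0 PD PN] := sgP.
apply: (tensor_ind tb); first split.
- exists (fun=> 0); split=> //; rewrite big1 // => k _.
  by have := additive_on0 sgP (b2 _ (e_dom k)).
- move=> _ _ [p [Pp ->]] [q [Pq ->]]; exists (fun k => p k + q k).
  split=> [k|]; first exact: PD.
  by rewrite -big_split; apply: eq_bigr => k _; rewrite (b2 _ (e_dom k) (p k) (q k)).
- move=> _ [p [Pp ->]]; exists (fun k => - p k); split=> [k|]; first exact: PN.
  by rewrite -sumrN; apply: eq_bigr => k _; rewrite (additive_onN sgP (b2 _ (e_dom k))).
move=> p x Pp Mx; exists (fun k => act P (c k x) p).
split=> [k|]; first exact: P_act (c_S k Mx) Pp.
rewrite [in b p x](c_decomp Mx) (additive_on_sum sgM (b1 _ Pp)) => [|k].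
  by apply: eq_bigr => k _; have Sk := c_S k Mx; rewrite b3.
exact: M_act (c_S k Mx) (e_dom k).
Qed.

Lemma dual_basis_flat : flat one mul S M.
Proof.
move=> P Q f sP sQ [f_dom _ _] f_inj W1 W2 d1 d2 b1 b2 t1 t2 g gD gd gb.
move=> _ _ /(tensor_decomp sP t1)[p [Pp ->]] /(tensor_decomp sP t1)[p' [Pp' ->]] gpp'.
suff pp' k : p k = p' k by apply: eq_bigr => k _; rewrite pp'.
apply: f_inj => //; have [psi [psiD psib]] := tensor_coord k sQ t2.
have [sgd1 bd1 _ _] := t1; have [sgd2 _ _ _] := t2; have [_ [_ _ _ _ Q1]] := sQ.
have psi_g r : (forall j, dom P (r j)) -> psi (g (\sum_j b1 (r j) (e j))) = f (r k).
  move=> Pr; rewrite (additive_on_sum sgd1 gD) => [|j]; last exact: bd1.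
  rewrite (additive_on_sum sgd2 psiD) => [|j]; last exact/gd/bd1.
  have fPr j : dom Q (f (r j)) by apply: f_dom.
  rewrite (bigD1 k) //= big1 => [|j jk]; rewrite gb // psib // c_e.
    by rewrite eqxx Q1 // addr0.
  by rewrite eq_sym (negbTE jk) (smod_act0 S0 sQ).
by rewrite -(psi_g p) // -(psi_g p') // gpp'.
Qed.

Lemma dual_basis_faithfully_flat (k0 : 'I_m) : faithfully_flat one mul S M.
Proof.
split=> [|P sP W d b tb d0 p Pp]; first exact: dual_basis_flat.
have [phi [phiD phib]] := tensor_coord k0 sP tb.
have [sgd bd _ _] := tb; have [_ [_ _ _ _ P1]] := sP.
have -> : p = act P (c k0 (e k0)) p by rewrite c_e eqxx P1.
by rewrite -phib // (d0 _ (bd _ _ Pp (e_dom k0))) (additive_on0 sgd phiD).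
Qed.

End DualBasis.

Section OreCenter.
Variables (F : fieldType) (L : splittingFieldType F).
Local Notation G := (gal_of (fullv : {vspace L})).
Variable s : G.
Implicit Types (p q z : {poly L}) (c : L).

Lemma galMfull (x y : G) a : (x * y)%g a = y (x a).
Proof. exact/galM/memvf. Qed.

Lemma expg_gal_fixed i a : s a = a -> (s ^+ i)%g a = a.
Proof. by move=> sa; elim: i => [|i IHi]; rewrite ?gal_id // expgS galMfull sa. Qed.

Lemma ore_mulE p q :
  ore_mul s p q = \sum_(i < size p) p`_i *: ('X^i * map_poly (s ^+ i)%g q).
Proof.
apply: eq_bigr => i _; rewrite /map_poly poly_def mulr_sumr scaler_sumr.
by apply: eq_bigr => j _; rewrite -scalerAr -exprD scalerA.
Qed.

Lemma ore_mul_polyM p q :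
  (forall i j, p`_i * (s ^+ i)%g q`_j = p`_i * q`_j) -> ore_mul s p q = p * q.
Proof.
move=> untwisted; rewrite -[p in RHS]coefK -[q in RHS]coefK !poly_def mulr_suml.
apply: eq_bigr => i _; rewrite mulr_sumr; apply: eq_bigr => j _.
by rewrite untwisted -scalerAl -scalerAr scalerA exprD.
Qed.

Definition ore_central q :=
  (forall i, s q`_i = q`_i) /\ (forall i, q`_i != 0 -> (#[s]%g %| i)%N).

Lemma ore_mul_centrall p q : ore_central p -> ore_mul s p q = p * q.
Proof.
move=> [_ p_supp]; apply: ore_mul_polyM => i j.
have [-> | /p_supp] := eqVneq p`_i 0; first by rewrite !mul0r.
by rewrite order_dvdn => /eqP ->; rewrite gal_id.
Qed.

Lemma ore_mul_fixedr p q : (forall j, s q`_j = q`_j) -> ore_mul s p q = p * q.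
Proof. by move=> sq; apply: ore_mul_polyM => i j; rewrite expg_gal_fixed. Qed.

Lemma ore_mulCl c q : ore_mul s c%:P q = c%:P * q.
Proof.
apply: ore_mul_polyM => -[|i] j; first by rewrite expg0 gal_id.
by rewrite coefC !mul0r.
Qed.

Lemma ore_mulXl q : ore_mul s 'X q = 'X * map_poly s q.
Proof.
rewrite ore_mulE size_polyX !big_ord_recl big_ord0 /= !coefX /=.
by rewrite scale0r add0r addr0 scale1r expr1 expg1.
Qed.

Lemma ore_mulCr z c : ore_mul s z c%:P = \poly_(i < size z) (z`_i * (s ^+ i)%g c).
Proof.
have [-> | c0] := eqVneq c 0.
  rewrite polyC0 /ore_mul size_poly0 big1 => [|i _]; last by rewrite big_ord0.
  by apply/polyP => i; rewrite coef_poly coef0 rmorph0 mulr0 if_same.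
rewrite /ore_mul size_polyC c0 poly_def; apply: eq_bigr => i _.
by rewrite big_ord1 coefC eqxx addn0.
Qed.

Lemma ore_centerP z : Defs.centerP (ore_mul s) z <-> ore_central z.
Proof.
split=> [zC | zC x]; last first.
  by have [zs _] := zC; rewrite ore_mul_centrall // ore_mul_fixedr // mulrC.
split=> [i | k zk].
  have sX j : s 'X`_j = 'X`_j.
    by rewrite coefX; case: (j == 1)%N; rewrite ?rmorph1 ?rmorph0.
  have := zC 'X; rewrite ore_mul_fixedr // ore_mulXl mulrC.
  move=> /(mulfI (negbT (polyX_eq0 _))).
  by move=> {2}->; rewrite coef_map.
rewrite order_dvdn; apply/gal_eqP => c _; rewrite gal_id.
have := congr1 (coefp k) (zC c%:P); rewrite /= ore_mulCr ore_mulCl coef_poly coefCM.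
case: ltnP => [_ | /(nth_default 0) z0]; last by rewrite z0 eqxx in zk.
by rewrite mulrC => /(mulIf zk).
Qed.

Lemma ore_central_coef0 q i : ore_central q -> ~~ (#[s]%g %| i)%N -> q`_i = 0.
Proof. by case=> _ q_supp; apply: contraNeq; apply: q_supp. Qed.

Lemma ore_centralP q :
  (forall i, s q`_i = q`_i) -> (forall i, ~~ (#[s]%g %| i)%N -> q`_i = 0) ->
  ore_central q.
Proof. by move=> sq q_supp; split=> // i; apply: contraNT => /q_supp ->. Qed.

Lemma ore_central0 : ore_central 0.
Proof. by apply: ore_centralP => i; rewrite coef0 // rmorph0. Qed.

Lemma ore_centralD p q : ore_central p -> ore_central q -> ore_central (p + q).
Proof.
move=> pC qC; apply: ore_centralP => i; rewrite coefD.
  by rewrite -{2}(proj1 pC i) -{2}(proj1 qC i) rmorphD.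
by move=> si; rewrite !ore_central_coef0 ?addr0.
Qed.

Lemma ore_centralN q : ore_central q -> ore_central (- q).
Proof.
move=> qC; apply: ore_centralP => i; rewrite coefN.
  by rewrite rmorphN; congr (- _); apply: (proj1 qC).
by move=> si; rewrite ore_central_coef0 ?oppr0.
Qed.

Lemma ore_central_sum n (f : 'I_n -> {poly L}) :
  (forall k, ore_central (f k)) -> ore_central (\sum_k f k).
Proof. by move=> fC; elim/big_ind: _ => //; [apply: ore_central0 | apply: ore_centralD]. Qed.

Lemma ore_centralZ c q : s c = c -> ore_central q -> ore_central (c *: q).
Proof.
move=> sc qC; apply: ore_centralP => i; rewrite coefZ.
  by rewrite rmorphM; congr (_ * _); [apply: sc | apply: (proj1 qC)].
by move=> si; rewrite ore_central_coef0 ?mulr0.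
Qed.

Lemma ore_centralC c : s c = c -> ore_central c%:P.
Proof. by move=> sc; apply: ore_centralP => -[|i]; rewrite coefC ?dvdn0 //= rmorph0. Qed.

Lemma ore_centralM p q : ore_central p -> ore_central q -> ore_central (p * q).
Proof.
move=> pC qC; apply: ore_centralP => i; rewrite coefM.
  rewrite rmorph_sum; apply: eq_bigr => j _.
  by rewrite rmorphM; congr (_ * _); [apply: (proj1 pC) | apply: (proj1 qC)].
move=> si; apply: big1 => j _.
have [sj | /(ore_central_coef0 pC) ->] := boolP (#[s]%g %| j)%N; last by rewrite mul0r.
rewrite (ore_central_coef0 qC) ?mulr0 //; apply: contra si => sij.
by rewrite -(subnKC (leq_ord j)) dvdn_add.
Qed.

Lemma ore_central_map (h : G) q :
  commute h s -> ore_central q -> ore_central (map_poly h q).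
Proof.
move=> chs qC; apply: ore_centralP => i; rewrite coef_map.
  by rewrite -galMfull chs galMfull (proj1 qC).
by move=> si; rewrite ore_central_coef0 // raddf0.
Qed.

End OreCenter.

Lemma unitmx_mxsub (R : comUnitRingType) m n (f : 'I_m -> 'I_n) (A : 'M[R]_n) :
  bijective f -> A \in unitmx -> mxsub f f A \in unitmx.
Proof.
move=> f_bij uA; suff /mulmx1_unit[] : mxsub f f A *m mxsub f f (invmx A) = 1%:M by [].
apply/matrixP => i j; rewrite !mxE.
transitivity (\sum_l A (f i) l * invmx A l (f j)).
  by rewrite (reindex f) /=; [apply: eq_bigr => k _; rewrite !mxE | exact: onW_bij].
have := congr1 (fun B : 'M_n => B (f i) (f j)) (mulmxV uA).
by rewrite !mxE (inj_eq (bij_inj f_bij)).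
Qed.

Section FixedFieldOfCentralCycle.
Variables (F : fieldType) (L : splittingFieldType F).
Local Notation G := (gal_of (fullv : {vspace L})).
Variables (s : G) (H : {group G}).
Hypotheses (cHs : {in H, forall h, commute h s}) (tiHs : (<[s]> :&: H)%g = 1%g).
Local Notation As := (fixedField <[s]>%g).

Lemma mem_fixedField_cycle a : (a \in As) = (s a == a).
Proof.
apply/idP/eqP => [/mem_fixedFieldP[_ -> //] | sa]; first exact: cycle_id.
by apply/(fixedFieldP (memvf a)) => _ /cycleP[i ->]; apply: expg_gal_fixed.
Qed.

Lemma fixedField_cycle_stable h :
  h \in H -> (h @: As <= As)%VS.
Proof.
move=> Hh; apply/subvP => _ /memv_imgP[a sa ->].
rewrite mem_fixedField_cycle in sa; rewrite mem_fixedField_cycle.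
by rewrite -galMfull (cHs Hh) galMfull (eqP sa).
Qed.

Definition gal_cycle_res (h : G) : gal_of As := gal As (gal_repr h).

Lemma gal_cycle_resE h a :
  h \in H -> a \in As -> gal_cycle_res h a = h a.
Proof. by move=> Hh; apply: galK; apply: fixedField_cycle_stable. Qed.

(* Two elements of H agreeing on the fixed field of s differ by an element of
   Gal(A / A^<s>) = <s>, which meets H trivially. *)
Lemma gal_cycle_res_inj : {in H &, injective gal_cycle_res}.
Proof.
move=> y z Hy Hz /eqP/gal_eqP yz.
suff : (y * z^-1)%g \in (<[s]> :&: H)%g.
  by rewrite tiHs => /set1gP/eqP; rewrite -eq_mulgV1 => /eqP.
rewrite in_setI [_ \in H]groupM ?groupV // andbT.
have <- : 'Gal(fullv / As)%g = <[s]>%g by rewrite gal_generated genGid.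
rewrite gal_kHom ?subvf //; apply/kAHomP => a sa.
rewrite galMfull -(gal_cycle_resE Hy sa) yz // gal_cycle_resE //.
by rewrite -galMfull mulgV gal_id.
Qed.

Lemma fixed_gal_matrix :
  exists w : 'I_#|{: {x : G | x \in H}}| -> L, (forall k, s (w k) = w k) /\
    \matrix_(i, k) val (enum_val i : {x : G | x \in H}) (w k) \in unitmx.
Proof.
pose A := gal_cycle_res @: H; have A1 : gal_cycle_res 1%g \in A by rewrite imset_f.
have [w [wE _] [uM _ _]] := gal_matrix A.
pose psi (i : 'I_#|{: {x : G | x \in H}}|) :=
  enum_rank_in A1 (gal_cycle_res (val (enum_val i))).
have psiE i : enum_val (psi i) = gal_cycle_res (val (enum_val i)).
  by rewrite enum_rankK_in // imset_f //; apply: valP.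
have psi_bij : bijective psi.
  apply: inj_card_bij => [i j /(congr1 enum_val) | ]; last first.
    by rewrite !card_ord card_in_imset ?card_sig //; apply: gal_cycle_res_inj.
  rewrite !psiE => /gal_cycle_res_inj eq_ij.
  by apply/enum_val_inj/val_inj/eq_ij; apply: valP.
have w_fixed j : tnth w j \in As by apply/wE/mem_tnth.
exists (fun k => tnth w (psi k)); split=> [k | ].
  by apply/eqP; rewrite -mem_fixedField_cycle.
congr (_ \in unitmx): (unitmx_mxsub psi_bij uM).
by apply/matrixP => i k; rewrite !mxE psiE gal_cycle_resE //; apply: valP.
Qed.

End FixedFieldOfCentralCycle.

Section GaloisCoordinates.
Variables (F : fieldType) (L : splittingFieldType F).
Local Notation G := (gal_of (fullv : {vspace L})).
Variables (s : G) (H : {group G}).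
Hypothesis cHs : {in H, forall h, commute h s}.
Local Notation I := {x : G | x \in H}.
Local Notation coact := (ore_coact (H := H)).
Local Notation n := #|{: I}|.
Variable e : 'I_n -> L.
Hypothesis e_fixed : forall k, s (e k) = e k.
Local Notation gal_mx := (\matrix_(i, k) val (enum_val i : I) (e k)).
Hypothesis unit_gal_mx : gal_mx \in unitmx.
Implicit Types (p q z : {poly L}) (w : {ffun I -> {poly L}}).

HB.instance Definition _ (h : I) := GRing.RMorphism.copy (coact h) (map_poly (val h)).

Lemma coact_coef h q i : (coact h q)`_i = val h q`_i.
Proof. exact: coef_map. Qed.

Lemma coactC h c : coact h c%:P = (val h c)%:P.
Proof. exact: map_polyC. Qed.

Definition mulH (x y : I) : I := exist _ (val x * val y)%g (groupM (valP x) (valP y)).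

Lemma coact_mulH x y q : coact y (coact x q) = coact (mulH x y) q.
Proof. by apply/polyP => i; rewrite !coact_coef galMfull. Qed.

Definition oneH : I := exist _ 1%g (group1 H).

Lemma coact_oneH q : coact oneH q = q.
Proof. by apply/polyP => i; rewrite coact_coef gal_id. Qed.

Lemma commute_s (h : I) : commute (val h) s.
Proof. exact/cHs/valP. Qed.

Lemma invmx_gal_fixed k i : s (invmx gal_mx k i) = invmx gal_mx k i.
Proof.
suff sM : map_mx s (invmx gal_mx) = invmx gal_mx by rewrite -{2}sM mxE.
rewrite map_invmx; congr invmx; apply/matrixP => i' k'.
have := congr1 (fun x : G => x (e k')) (commute_s (enum_val i')).
by rewrite /= !galMfull e_fixed !mxE.
Qed.

Definition rmul_ord (h : I) (i : 'I_n) : 'I_n := enum_rank (mulH (enum_val i) h).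

Lemma rmul_ord_inj h : injective (rmul_ord h).
Proof. by move=> i j /enum_rank_inj/(congr1 val)/mulIg/val_inj/enum_val_inj. Qed.

Definition rmul_perm h : 'S_n := perm (@rmul_ord_inj h).

Lemma enum_val_rmul_perm h i : enum_val (rmul_perm h i) = mulH (enum_val i) h.
Proof. by rewrite permE enum_rankK. Qed.

(* h permutes the rows of [gal_mx], hence the columns of its inverse. *)
Lemma invmx_gal_perm (h : I) k i :
  val h (invmx gal_mx k i) = invmx gal_mx k (rmul_perm h i).
Proof.
pose R := row_perm (rmul_perm h) gal_mx.
have hM : map_mx (val h) gal_mx = R.
  by apply/matrixP => i' k'; rewrite !mxE enum_val_rmul_perm galMfull.
have R_inv : R *m col_perm (rmul_perm h) (invmx gal_mx) = 1%:M.
  rewrite /R row_permE col_permE mulmxA -[perm_mx _ *m _ *m _]mulmxA mulmxV //.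
  by rewrite mulmx1 -perm_mxM mulgV perm_mx1.
have : map_mx (val h) (invmx gal_mx) = col_perm (rmul_perm h) (invmx gal_mx).
  by rewrite map_invmx hM -[LHS]mulmx1 -R_inv mulmxA mulVmx ?mul1mx // -hM map_unitmx.
by move/matrixP/(_ k i); rewrite !mxE.
Qed.

Definition ecoordf k w : {poly L} := \sum_i invmx gal_mx k i *: w (enum_val i).

Definition ecoord k q : {poly L} := ecoordf k [ffun h => coact h q].

Lemma ecoordE k q : ecoord k q = \sum_i invmx gal_mx k i *: coact (enum_val i) q.
Proof. by apply: eq_bigr => i _; rewrite ffunE. Qed.

Lemma ecoordfD k : {morph ecoordf k : w1 w2 / w1 + w2}.
Proof.
by move=> w1 w2; rewrite -big_split; apply: eq_bigr => i _; rewrite ffunE scalerDr.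
Qed.

Lemma ecoordD k : {morph ecoord k : p q / p + q}.
Proof.
move=> p q; rewrite /ecoord -ecoordfD; congr ecoordf.
by apply/ffunP => h; rewrite !ffunE; apply: rmorphD.
Qed.

Lemma ecoordf_decomp w (j : 'I_n) :
  w (enum_val j) = \sum_k ecoordf k w * (val (enum_val j : I) (e k))%:P.
Proof.
transitivity (\sum_i (gal_mx *m invmx gal_mx) j i *: w (enum_val i)).
  rewrite mulmxV // (bigD1 j) //= big1 => [|i /negbTE ij].
    by rewrite !mxE eqxx scale1r addr0.
  by rewrite !mxE eq_sym ij scale0r.
under eq_bigr => i _ do rewrite mxE scaler_suml.
rewrite exchange_big; apply: eq_bigr => k _; rewrite mulr_suml; apply: eq_bigr => i _.
by rewrite [RHS]mulrC mul_polyC scalerA mxE.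
Qed.

Lemma ecoord_decomp q : q = \sum_k ecoord k q * (e k)%:P.
Proof.
have := ecoordf_decomp [ffun h => coact h q] (enum_rank oneH).
rewrite enum_rankK ffunE coact_oneH => {1}->.
by apply: eq_bigr => k _; rewrite gal_id.
Qed.

Lemma ecoord_e k j : ecoord k (e j)%:P = (k == j)%:R%:P.
Proof.
have := congr1 (fun B : 'M_n => B k j) (mulVmx unit_gal_mx); rewrite !mxE => <-.
rewrite ecoordE rmorph_sum; apply: eq_bigr => i _.
by rewrite coactC -mul_polyC -polyCM !mxE.
Qed.

Lemma ecoord_coinv (h : I) k q : coact h (ecoord k q) = ecoord k q.
Proof.
rewrite !ecoordE rmorph_sum.
rewrite [RHS](reindex_inj (@perm_inj _ (rmul_perm h))); apply: eq_bigr => i _.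
rewrite -(invmx_gal_perm h) enum_val_rmul_perm -coact_mulH.
exact: map_polyZ.
Qed.

Lemma ore_central_ecoordf k w :
  (forall h, ore_central s (w h)) -> ore_central s (ecoordf k w).
Proof.
move=> wC; apply: ore_central_sum => i.
by apply: ore_centralZ; [apply: invmx_gal_fixed | apply: wC].
Qed.

Lemma ore_central_coact (h : I) q : ore_central s q -> ore_central s (coact h q).
Proof. exact/ore_central_map/commute_s. Qed.

Lemma ore_central_ecoord k q : ore_central s q -> ore_central s (ecoord k q).
Proof.
by move=> qC; apply: ore_central_ecoordf => h; rewrite ffunE; apply: ore_central_coact.
Qed.

Lemma ecoordM k z q : coinvP coact z -> ecoord k (z * q) = z * ecoord k q.
Proof.
move=> zH; rewrite !ecoordE mulr_sumr; apply: eq_bigr => i _.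
by rewrite rmorphM -scalerAr; congr (_ *: (_ * _)); apply: zH.
Qed.

Lemma ecoordf_mul k z q : ecoordf k [ffun h => z * coact h q] = z * ecoord k q.
Proof.
rewrite ecoordE mulr_sumr; apply: eq_bigr => i _.
by rewrite ffunE -scalerAr.
Qed.

Local Notation center := (Defs.centerP (ore_mul s)).
Local Notation center_coinv := (Zco (ore_mul s) coact).

Lemma ore_over_coinvP c : ore_over (fixedField H) c <-> coinvP coact c.
Proof.
split=> [cB h | cH i].
  by apply/polyP => i; rewrite coact_coef (fixedFieldP (memvf _) (cB i)) ?(valP h).
by apply/(fixedFieldP (memvf _)) => x Hx; rewrite -(coact_coef (exist _ x Hx)) cH.
Qed.

Lemma center_subgroup : subgroupP center.
Proof.
split=> [|x y /ore_centerP xC /ore_centerP yC | x /ore_centerP xC]; apply/ore_centerP.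
- exact: ore_central0.
- exact: ore_centralD.
- exact: ore_centralN.
Qed.

Lemma center_coact z h : center z -> center (coact h z).
Proof. by move=> /ore_centerP zC; apply/ore_centerP/ore_central_coact. Qed.

Lemma center_e k : center (e k)%:P.
Proof. exact/ore_centerP/ore_centralC. Qed.

Lemma center_coinv_ecoord k z : center z -> center_coinv (ecoord k z).
Proof.
move=> /ore_centerP zC; split=> [|h]; last exact: ecoord_coinv.
exact/ore_centerP/ore_central_ecoord.
Qed.

Lemma center_ecoordf k (w : {ffun I -> {poly L}}) :
  (forall h, center (w h)) -> center (ecoordf k w).
Proof.
by move=> wZ; apply/ore_centerP/ore_central_ecoordf => h; apply/ore_centerP/wZ.
Qed.

Lemma center_mul a z : center a -> center z -> center (ore_mul s a z).
Proof.
move=> /ore_centerP aC /ore_centerP zC.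
by apply/ore_centerP; rewrite ore_mul_centrall //; apply: ore_centralM.
Qed.

Lemma center_coinv_mul a z : center_coinv a -> center z -> center (ore_mul s a z).
Proof. by move=> [aZ _]; apply: center_mul. Qed.

Lemma center_decomp z : center z -> z = \sum_k ore_mul s (ecoord k z) (e k)%:P.
Proof.
move=> /ore_centerP zC; rewrite {1}(ecoord_decomp z).
by apply: eq_bigr => k _; rewrite ore_mul_centrall //; apply: ore_central_ecoord.
Qed.

Lemma galois_map_central p q :
  center p -> galois_map (ore_mul s) coact p q = [ffun h => p * coact h q].
Proof. by move=> /ore_centerP pC; apply/ffunP => h; rewrite !ffunE ore_mul_centrall. Qed.

Lemma galois_map_balanced :
  @balanced _ center_coinv (Zmod (ore_mul s)) (Zmod (ore_mul s)) _
    (galois_map (ore_mul s) coact).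
Proof.
split=> [p pZ x y _ _ | q _ x y xZ yZ | a p q [aZ aH] pZ _] /=.
- by rewrite !galois_map_central //; apply/ffunP => h; rewrite !ffunE rmorphD mulrDr.
- have [_ ZD _] := center_subgroup.
  rewrite !galois_map_central //; last by apply: ZD.
  by apply/ffunP => h; rewrite !ffunE mulrDl.
- rewrite !galois_map_central //; last by apply: center_mul.
  have /ore_centerP aC := aZ; have /ore_centerP pC := pZ.
  apply/ffunP => h; rewrite !ffunE !ore_mul_centrall // rmorphM.
  by rewrite mulrCA mulrA; congr (_ * _ * _); apply/esym/aH.
Qed.

Lemma galois_map_tensor :
  @is_tensor _ center_coinv (Zmod (ore_mul s)) (Zmod (ore_mul s)) _
    (fun f : {ffun I -> {poly L}} => forall h, center (f h))
    (galois_map (ore_mul s) coact).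
Proof.
have [Z0 ZD ZN] := center_subgroup.
apply: (@is_tensor_dual_basis _ _ (Zmod (ore_mul s)) _ (fun k => (e k)%:P) ecoord
  center_subgroup center_coinv_mul center_e center_coinv_ecoord center_decomp
  (Zmod (ore_mul s)) _ _ _ ecoordf).
- split=> [h | x y dx dy h | x dx h]; rewrite ffunE.
  + exact: Z0.
  + exact: ZD.
  + exact: ZN.
- by move=> p x pZ xZ h; rewrite ffunE; apply/center_mul/center_coact.
- exact: galois_map_balanced.
- by move=> k x y _ _; apply: ecoordfD.
- exact: center_ecoordf.
- move=> k p x pZ /ore_centerP xZ /=; rewrite galois_map_central // ecoordf_mul mulrC.
  by rewrite ore_mul_centrall //; apply: ore_central_ecoord.
move=> w wZ; apply/ffunP => h; rewrite sum_ffunE -[h]enum_rankK.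
rewrite ecoordf_decomp; apply: eq_bigr => k _.
by rewrite galois_map_central ?ffunE ?coactC //; apply: center_ecoordf.
Qed.

Lemma center_faithfully_flat :
  faithfully_flat 1 (ore_mul s) center_coinv (Zmod (ore_mul s)).
Proof.
have Zco0 : center_coinv 0.
  by split=> [|h]; [apply/ore_centerP/ore_central0 | apply: rmorph0].
have Zco_comm a b : center_coinv a -> center_coinv b -> ore_mul s a b = ore_mul s b a.
  by move=> [aZ _] _; apply: aZ.
have ecoord_additive k : additive_on center (ecoord k) by move=> x y _ _; apply: ecoordD.
have ecoord_linear k a x : center_coinv a -> center x ->
    ecoord k (ore_mul s a x) = ore_mul s a (ecoord k x).
  move=> [/ore_centerP aC aH] _.
  by rewrite !ore_mul_centrall // ecoordM.
have ecoord_e' k j : ecoord k (e j)%:P = if k == j then 1 else 0.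
  by rewrite ecoord_e; case: eqP.
exact: (@dual_basis_faithfully_flat _ 1 (ore_mul s) center_coinv (Zmod (ore_mul s)) _
  (fun k => (e k)%:P) ecoord center_subgroup center_coinv_mul center_e center_coinv_ecoord
  center_decomp Zco0 Zco_comm ecoord_additive ecoord_linear ecoord_e' (enum_rank oneH)).
Qed.

Lemma ore_centrally_galois :
  centrally_galois 1 (ore_mul s) coact (ore_over (fixedField H)).
Proof.
split; [exact: ore_over_coinvP | exact: center_coact | exact: galois_map_tensor |].
exact: center_faithfully_flat.
Qed.

End GaloisCoordinates.

Theorem corollary3p18 (F : fieldType) (L : splittingFieldType F)
    (K : {subfield L}) (H N : {group gal_of (fullv : {vspace L})})
    (s : gal_of (fullv : {vspace L})) :
  galois K fullv ->
  (N * H)%g = 'Gal(fullv / K)%g ->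
  (N :&: H)%g = 1%g ->
  N = <[s]>%g :> {set _} ->
  s \in 'Z('Gal(fullv / K))%g ->
  centrally_galois 1 (ore_mul s) (ore_coact (H := H))
    (ore_over (fixedField H)).
Proof.
move=> _ NH tiNH Ns sZ.
have cHs : {in H, forall h, commute h s}.
  move=> h Hh; have /center.centerP[_ cGs] := sZ; apply/esym/cGs.
  by rewrite -NH -[h]mul1g mem_mulg.
have tiHs : (<[s]> :&: H)%g = 1%g by rewrite -Ns.
have [e [e_fixed unit_gal_mx]] := fixed_gal_matrix cHs tiHs.
exact (ore_centrally_galois cHs e_fixed unit_gal_mx).
Qed.
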